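(* Consider a mobile robot with perfectly known state $x^R$ and known deterministic discrete-time dynamics $x^R_{t+1}=f^R(x^R_t,u_t)$, navigating a static but initially unmapped environment $\mathcal{W}\subseteq\mathbb{R}^3$. The robot's onboard perception conservatively identifies free regions and adds them to a known free space $\mathcal{W}^{\text{free}}(\eta_t)\subseteq\mathcal{W}$ at each time $t$, where $\eta_t$ is the robot's information state. Fix a horizon $H\ge1$ and a braking input $u^{\text{brake}}$, used as fallback policy $\pi^{\text{shield}}(\eta)\equiv u^{\text{brake}}$. Consider the model-predictive safety filter which, given a candidate action $u$ at information state $\eta$, lets $u$ through if applying $u$ and then $u^{\text{brake}}$ for the next $H-1$ steps brings the robot to a full stop while its position remains within the currently known free space $\mathcal{W}^{\text{free}}(\eta)$, and otherwise overrides $u$ with $u^{\text{brake}}$. Then, for every task policy, this filter maintains safety (the robot never collides with an obstacle) from any deployment information state $\eta_0$ in which the robot is at rest within the initially known free space $\mathcal{W}^{\text{free}}(\eta_0)$.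
   Context: ''Conservatively identifies free regions'' means that every point of $\mathcal{W}^{\text{free}}(\eta_t)$ is truly obstacle-free, and the known free space never shrinks: $\mathcal{W}^{\text{free}}(\eta_{t+1})\supseteq\mathcal{W}^{\text{free}}(\eta_t)$. A robot at a full stop (at rest) remains at rest at the same position when $u^{\text{brake}}$ is applied. Collision means the robot's position lies outside the true obstacle-free space; in particular a position inside the known free space is collision-free. *)

From Stdlib Require Import Reals ClassicalDescription.
Open Scope R_scope.

Definition R3 : Type := (R * R * R)%type.
Definition region : Type := R3 -> Prop.
Definition subset (A B : region) : Prop := forall p, A p -> B p.

Fixpoint brake_iter {X U : Type} (f : X -> U -> X) (ub : U) (n : nat) (x : X) : X :=
  match n with
  | O => x
  | S n' => brake_iter f ub n' (f x ub)
  end.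

(* The k-th predicted state (k = 1..H) is brake_iter f ub (k-1) (f x u). *)
Definition mps_check {X U : Type} (f : X -> U -> X) (pos : X -> R3)
  (at_rest : X -> Prop) (ub : U) (H : nat) (K : region) (x : X) (u : U) : Prop :=
  at_rest (brake_iter f ub (H - 1) (f x u)) /\
  (forall k : nat, (1 <= k <= H)%nat -> K (pos (brake_iter f ub (k - 1) (f x u)))).

Definition mps_filter {X U : Type} (f : X -> U -> X) (pos : X -> R3)
  (at_rest : X -> Prop) (ub : U) (H : nat) (K : region) (x : X) (u : U) : U :=
  if excluded_middle_informative (mps_check f pos at_rest ub H K x u) then u else ub.

(* The invariant is that the robot can be brought to rest by braking while its
   position stays in the known free space. If the filter lets the candidate
   input through, the passed check is itself such a braking certificate for the
   next state; if it overrides it, braking follows the previous certificate, one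
   step shorter (or keeps the robot at rest once it has stopped). Since the
   known free space only grows, the certificate survives the map update, and
   since it is conservative, the current position is always obstacle-free. *)

From Stdlib Require Import Reals ClassicalDescription Lia.

Section BrakingCertificate.

Context {X U : Type}.
Variables (f : X -> U -> X) (pos : X -> R3) (at_rest : X -> Prop).
Variable ub : U.

Definition brakes_safely_in (K : region) (x : X) : Prop :=
  exists n, at_rest (brake_iter f ub n x) /\
    forall k, (k <= n)%nat -> K (pos (brake_iter f ub k x)).

Lemma brakes_safely_in_pos (K : region) (x : X) :
  brakes_safely_in K x -> K (pos x).
Proof.
  intros [n [_ Hfree]]. apply (Hfree 0%nat). lia.
Qed.

Lemma brakes_safely_in_rest (K : region) (x : X) :
  at_rest x -> K (pos x) -> brakes_safely_in K x.
Proof.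
  intros Hrest Hx. exists 0%nat. split; [exact Hrest|].
  intros k Hk. replace k with 0%nat by lia. exact Hx.
Qed.

Lemma brakes_safely_in_subset (K K' : region) (x : X) :
  subset K K' -> brakes_safely_in K x -> brakes_safely_in K' x.
Proof.
  intros HKK' [n [Hrest Hfree]]. exists n. split; [exact Hrest|].
  intros k Hk. apply HKK', Hfree, Hk.
Qed.

Lemma mps_check_brakes_safely_in (H : nat) (K : region) (x : X) (u : U) :
  (1 <= H)%nat -> mps_check f pos at_rest ub H K x u ->
  brakes_safely_in K (f x u).
Proof.
  intros HH [Hrest Hfree]. exists (H - 1)%nat. split; [exact Hrest|].
  intros k Hk. replace k with (S k - 1)%nat by lia. apply Hfree. lia.
Qed.

Hypothesis brake_at_rest : forall x, at_rest x -> f x ub = x.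

Lemma brakes_safely_in_brake (K : region) (x : X) :
  brakes_safely_in K x -> brakes_safely_in K (f x ub).
Proof.
  intros [[|n] [Hrest Hfree]].
  - simpl in Hrest. rewrite (brake_at_rest x Hrest).
    apply brakes_safely_in_rest; [exact Hrest|]. apply (Hfree 0%nat). lia.
  - exists n. split; [exact Hrest|].
    intros k Hk. apply (Hfree (S k)). lia.
Qed.

Lemma brakes_safely_in_mps_filter (H : nat) (K : region) (x : X) (u : U) :
  (1 <= H)%nat -> brakes_safely_in K x ->
  brakes_safely_in K (f x (mps_filter f pos at_rest ub H K x u)).
Proof.
  intros HH Hx. unfold mps_filter.
  destruct (excluded_middle_informative _) as [Hcheck|_].
  - exact (mps_check_brakes_safely_in H K x u HH Hcheck).
  - exact (brakes_safely_in_brake K x Hx).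
Qed.

End BrakingCertificate.

(* X : robot states, U : inputs, I : information states.
   state eta : the (perfectly known) robot state contained in eta;
   Wfree eta : known free space at information state eta;
   Wobsfree : the true obstacle-free part of the environment W. *)
Theorem corollary4
  (X U I : Type) (fR : X -> U -> X) (pos : X -> R3) (at_rest : X -> Prop)
  (W Wobsfree : region) (Wfree : I -> region) (state : I -> X)
  (H : nat) (ubrake : U)
  (HH : (1 <= H)%nat)
  (Hobs_W : subset Wobsfree W)
  (Hbrake_rest : forall x, at_rest x -> fR x ubrake = x)
  (pi_task : I -> U) (eta : nat -> I)
  (Hcons : forall t, subset (Wfree (eta t)) Wobsfree)
  (Hmono : forall t, subset (Wfree (eta t)) (Wfree (eta (S t))))
  (Hdyn : forall t, state (eta (S t)) =
      fR (state (eta t))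
         (mps_filter fR pos at_rest ubrake H (Wfree (eta t)) (state (eta t))
                     (pi_task (eta t))))
  (Hinit_rest : at_rest (state (eta 0%nat)))
  (Hinit_free : Wfree (eta 0%nat) (pos (state (eta 0%nat)))) :
  forall t : nat, Wobsfree (pos (state (eta t))).
Proof.
  assert (Hinv : forall t,
    brakes_safely_in fR pos at_rest ubrake (Wfree (eta t)) (state (eta t))).
  { induction t as [|t IH].
    - now apply brakes_safely_in_rest.
    - apply brakes_safely_in_subset with (K := Wfree (eta t)); [apply Hmono|].
      rewrite Hdyn. now apply brakes_safely_in_mps_filter. }
  intro t. apply (Hcons t). eapply brakes_safely_in_pos, Hinv.
Qed.
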